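(* Let $(V_4,g)$ be an oriented space-time with Ricci tensor $R$ and self-dual Weyl tensor $\mathcal W$. (i) Let $\mathcal U$ be a normalized self-dual bivector, $\mathcal U=\frac1{\sqrt2}(U-i*U)$ with $U$ a simple unit 2-form, and $\Pi=2\,\mathcal U\cdot\bar{\mathcal U}$. Then $R$ is algebraically of Einstein–Maxwell type with unitary principal bivector $\mathcal U$ (i.e. $R=-\kappa\Pi$ for some nonvanishing function $\kappa$) if and only if $R\neq0$, $\mathrm{tr}R=0$ and $R\cdot\mathcal U=\mathcal U\cdot R$. (ii) Let $\Pi=v-h$ be the structure tensor of a 2+2 almost-product structure (time-like plane with projector $v$, space-like orthogonal plane with projector $h$). Then the space-time is of Petrov–Bel type D with principal structure $\Pi$ if and only if $$a\neq0,\qquad \Pi^{\mu}{}_{(\lambda}\mathcal P_{\nu)\mu\gamma\delta}=0,\qquad \mathcal P\equiv\mathcal W+\frac ba\mathcal G,$$ where $a=\mathrm{Tr}\mathcal W^2$, $b=\mathrm{Tr}\mathcal W^3$.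
   Context: Signature $(-,+,+,+)$; curvature conventions as in Kramer et al. For 2-tensors, $(A\cdot B)^\alpha{}_\beta=A^\alpha{}_\mu B^\mu{}_\beta$, $\mathrm{tr}A=A^\alpha{}_\alpha$; bar denotes complex conjugation. For double 2-forms, $(P\circ Q)^{\alpha\beta}{}_{\rho\sigma}=\frac12P^{\alpha\beta}{}_{\mu\nu}Q^{\mu\nu}{}_{\rho\sigma}$, $P^2=P\circ P$, $\mathrm{Tr}P=\frac12P^{\alpha\beta}{}_{\alpha\beta}$. $*$ is the Hodge dual ($*F=\eta(F)$, $*W=\eta\circ W$), $\eta$ the volume element, $G=\frac12g\wedge g$ with $(A\wedge B)_{\alpha\beta\mu\nu}=A_{\alpha\mu}B_{\beta\nu}+A_{\beta\nu}B_{\alpha\mu}-A_{\alpha\nu}B_{\beta\mu}-A_{\beta\mu}B_{\alpha\nu}$; $\mathcal G=\frac12(G-i\eta)$, $\mathcal W=\frac12(W-i*W)$. For a simple unit 2-form $U$ with time-like plane $V$ (volume element $U$) and orthogonal complement $H$, $v=U^2$, $h=-( *U)^2$ are the projectors and $\Pi=v-h=2\mathcal U\cdot\bar{\mathcal U}$. Type D: $\mathcal W$ has a double eigenvalue and minimal polynomial of degree two, i.e. $\mathcal W=3\rho\,\mathcal U\otimes\mathcal U+\rho\mathcal G$, $\rho=-b/a$; its principal structure is $\Pi=2\mathcal U\cdot\bar{\mathcal U}$ built from this canonical bivector $\mathcal U$. *)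

(* Pointwise (tangent-space) formalization in a positively
   oriented orthonormal frame of signature (-,+,+,+).  All tensors are given
   by their fully covariant components; indices are raised with eta. *)
From HB Require Import structures.
From mathcomp Require Import all_boot all_order all_algebra.
From mathcomp Require Import complex.
Set Implicit Arguments. Unset Strict Implicit. Unset Printing Implicit Defensive.
Import Order.TTheory GRing.Theory Num.Theory.
Local Open Scope ring_scope.

Notation idx := 'I_4.

Section Defs.
Variable K : rcfType.
Notation C := (K[i]).

Definition toC (x : K) : C := Complex x 0.
Definition ci : C := Complex 0 1.
Definition cconj (z : C) : C := conjc z.

Definition tensor2 := idx -> idx -> C.
Definition tensor4 := idx -> idx -> idx -> idx -> C.

Definition gm (a b : idx) : C :=
  if a == b then (if val a == 0%N then -1 else 1) else 0.

(* volume element eta_{abcd}, eta_{0123} = 1 *)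
Definition zi (a : idx) : int := (val a)%:Z.
Definition vol (a b c d : idx) : C :=
  (((zi b - zi a) * (zi c - zi a) * (zi d - zi a) * (zi c - zi b)
    * (zi d - zi b) * (zi d - zi c))%:~R) / 12%:R.

Definition realT2 (A : idx -> idx -> K) : tensor2 := fun a b => toC (A a b).
Definition realT4 (A : idx -> idx -> idx -> idx -> K) : tensor4 :=
  fun a b c d => toC (A a b c d).

Definition dot2 (A B : tensor2) : tensor2 :=
  fun a b => \sum_(m : idx) \sum_(n : idx) A a m * gm m n * B n b.
Definition tr2 (A : tensor2) : C := \sum_(a : idx) \sum_(b : idx) gm a b * A a b.
Definition conj2 (A : tensor2) : tensor2 := fun a b => cconj (A a b).
Definition scale2 (k : C) (A : tensor2) : tensor2 := fun a b => k * A a b.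

Definition hdual2 (F : tensor2) : tensor2 :=
  fun a b => 2%:R^-1 * \sum_(c : idx) \sum_(d : idx) \sum_(c' : idx) \sum_(d' : idx)
     vol a b c d * gm c c' * gm d d' * F c' d'.

Definition comp4 (P Q : tensor4) : tensor4 :=
  fun a b r s => 2%:R^-1 * \sum_(m : idx) \sum_(n : idx) \sum_(m' : idx) \sum_(n' : idx)
     P a b m n * gm m m' * gm n n' * Q m' n' r s.
Definition Tr4 (P : tensor4) : C :=
  2%:R^-1 * \sum_(a : idx) \sum_(b : idx) \sum_(c : idx) \sum_(d : idx)
     gm a c * gm b d * P a b c d.
Definition volT : tensor4 := vol.
Definition hdual4 (W : tensor4) : tensor4 := comp4 volT W.
Definition wedge (A B : tensor2) : tensor4 :=
  fun a b m n => A a m * B b n + A b n * B a m - A a n * B b m - A b m * B a n.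
Definition Gt : tensor4 := fun a b c d => 2%:R^-1 * wedge gm gm a b c d.
Definition sdG : tensor4 := fun a b c d => 2%:R^-1 * (Gt a b c d - ci * volT a b c d).
Definition sdW (W : tensor4) : tensor4 :=
  fun a b c d => 2%:R^-1 * (W a b c d - ci * hdual4 W a b c d).
Definition tens22 (A B : tensor2) : tensor4 := fun a b c d => A a b * B c d.

(* simple unit 2-form with time-like plane *)
Definition simple_unit_2form (U : idx -> idx -> K) : Prop :=
  (forall a b, U a b = - U b a) /\
  (forall a b c d, U a b * U c d + U a c * U d b + U a d * U b c = 0) /\
  2%:R^-1 * (\sum_(a : idx) \sum_(b : idx) \sum_(a' : idx) \sum_(b' : idx)
       realT2 U a b * gm a a' * gm b b' * realT2 U a' b') = -1.

Definition sdU (U : idx -> idx -> K) : tensor2 :=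
  fun a b => (toC (Num.sqrt 2%:R))^-1 * (realT2 U a b - ci * hdual2 (realT2 U) a b).

Definition PiU (U : idx -> idx -> K) : tensor2 :=
  scale2 2%:R (dot2 (sdU U) (conj2 (sdU U))).

Definition proj_v (U : idx -> idx -> K) : tensor2 := dot2 (realT2 U) (realT2 U).
Definition proj_h (U : idx -> idx -> K) : tensor2 :=
  fun a b => - dot2 (hdual2 (realT2 U)) (hdual2 (realT2 U)) a b.
Definition Pi_vh (U : idx -> idx -> K) : tensor2 :=
  fun a b => proj_v U a b - proj_h U a b.

Definition EM_type (Ric : idx -> idx -> K) (U : idx -> idx -> K) : Prop :=
  exists kappa : K, kappa != 0 /\ realT2 Ric = scale2 (- toC kappa) (PiU U).

Definition weyl_tensor (W : idx -> idx -> idx -> idx -> K) : Prop :=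
  (forall a b c d, W a b c d = - W b a c d) /\
  (forall a b c d, W a b c d = W c d a b) /\
  (forall a b c d, W a b c d + W a c d b + W a d b c = 0) /\
  (forall a c, \sum_(b : idx) \sum_(d : idx) gm b d * realT4 W a b c d = 0).

Definition a_inv (W : idx -> idx -> idx -> idx -> K) : C :=
  Tr4 (comp4 (sdW (realT4 W)) (sdW (realT4 W))).
Definition b_inv (W : idx -> idx -> idx -> idx -> K) : C :=
  Tr4 (comp4 (sdW (realT4 W)) (comp4 (sdW (realT4 W)) (sdW (realT4 W)))).

Definition typeD_principal (W : idx -> idx -> idx -> idx -> K) (Pi : tensor2) : Prop :=
  exists U : idx -> idx -> K, simple_unit_2form U /\ PiU U = Pi /\
    let rho := - b_inv W / a_inv W in
    rho != 0 /\
    sdW (realT4 W) = (fun a b c d => 3%:R * rho * tens22 (sdU U) (sdU U) a b c d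
                                     + rho * sdG a b c d).

Definition Ptens (W : idx -> idx -> idx -> idx -> K) : tensor4 :=
  fun a b c d => sdW (realT4 W) a b c d + b_inv W / a_inv W * sdG a b c d.

Definition symPiP (Pi : tensor2) (P : tensor4) (l n g d : idx) : C :=
  2%:R^-1 * \sum_(mu : idx) \sum_(m : idx)
    (gm mu m * Pi m l * P n mu g d + gm mu m * Pi m n * P l mu g d).

End Defs.

From Pilot Require Import Defs.
From HB Require Import structures.
From mathcomp Require Import all_boot all_order all_algebra.
From mathcomp Require Import complex.
From mathcomp Require Import ring lra.
From Stdlib Require Import FunctionalExtensionality.
Set Implicit Arguments. Unset Strict Implicit. Unset Printing Implicit Defensive.
Import Order.TTheory GRing.Theory Num.Theory.
Local Open Scope complex_scope.
Local Open Scope ring_scope.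

(* Write M(F) for the matrix of mixed components F^a_b of a 2-form F.  In four
   Lorentzian dimensions any two 2-forms satisfy
     M(F) M(G) - M( *G) M( *F) = 1/2 tr (M(F) M(G)) 1.
   For the simple unit 2-form U, with u = M(U) and w = M( *U), this gives
   u w = w u = 0, u^2 - w^2 = 1, and u X u = 1/2 tr (X u) u for every 2-form X;
   hence Pi = u^2 + w^2 (which is v - h) is an involution with Pi u = u and
   Pi w = -w.
   (i) A real symmetric R commuting with (u - i w)/sqrt 2 commutes with u and
   with w, so R u = t u and R w = -t' w; then R = t u^2 - t' w^2, and
   tr R = 0 forces t = t', i.e. R = t Pi.
   (ii) Each slice P_{..cd} of P = WW + (b/a) GG is a self-dual 2-form, and the
   condition Pi^mu_(l P_n)mu cd = 0 says exactly that it commutes with Pi.  A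
   self-dual 2-form commuting with Pi is a multiple of UU, so by the pair
   symmetry of P (left and right duals of a Weyl tensor agree) P = lam UU (x) UU.
   Taking traces, with Tr WW = 0, Tr GG = 3 and Tr UU (x) UU = -1, gives
   lam = -3 b/a = 3 rho. *)

Definition i0 : idx := @Ordinal 4 0 isT.
Definition i1 : idx := @Ordinal 4 1 isT.
Definition i2 : idx := @Ordinal 4 2 isT.
Definition i3 : idx := @Ordinal 4 3 isT.

Lemma sum_idx (R : nmodType) (F : idx -> R) :
  \sum_(i : idx) F i = F i0 + F i1 + F i2 + F i3.
Proof.
rewrite !big_ord_recl big_ord0 addr0 !addrA.
by congr (_ + _ + _ + _); congr F; apply: val_inj.
Qed.

Lemma idx_ind (P : idx -> Prop) : P i0 -> P i1 -> P i2 -> P i3 -> forall a, P a.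
Proof.
move=> P0 P1 P2 P3 [[|[|[|[|n]]]] Hn] //.
- by rewrite (_ : Ordinal Hn = i0) //; apply: val_inj.
- by rewrite (_ : Ordinal Hn = i1) //; apply: val_inj.
- by rewrite (_ : Ordinal Hn = i2) //; apply: val_inj.
- by rewrite (_ : Ordinal Hn = i3) //; apply: val_inj.
Qed.

Ltac idxcase a := elim/idx_ind: a.

Section Frame.
Variable K : rcfType.
Local Notation C := (K[i]).
Local Notation gm := (@gm K).

Definition sgn (a : idx) : C := gm a a.

Lemma gmE a b : gm a b = if a == b then sgn a else 0.
Proof. by rewrite /sgn /Defs.gm; case: eqP => // ->; rewrite eqxx. Qed.

Lemma sgn_neq0 a : sgn a != 0.
Proof. by idxcase a; rewrite /sgn /Defs.gm /= ?oppr_eq0 oner_eq0. Qed.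

Lemma sum_idx1 (F : idx -> C) m : (forall n, n != m -> F n = 0) -> \sum_n F n = F m.
Proof. by move=> F0; rewrite (bigD1 m) //= big1 ?addr0 // => n /F0. Qed.

Lemma sum_gm (F : idx -> C) a : \sum_b gm a b * F b = sgn a * F a.
Proof.
rewrite (sum_idx1 (m := a)) ?gmE ?eqxx // => b nba.
by rewrite gmE eq_sym (negPf nba) mul0r.
Qed.

End Frame.

(** * Two-forms and their matrices *)

Definition form2 (R : zmodType) (y01 y02 y03 y12 y13 y23 : R) (a b : idx) : R :=
  match val a, val b with
  | 0, 1 => y01 | 1, 0 => - y01
  | 0, 2 => y02 | 2, 0 => - y02
  | 0, 3 => y03 | 3, 0 => - y03
  | 1, 2 => y12 | 2, 1 => - y12
  | 1, 3 => y13 | 3, 1 => - y13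
  | 2, 3 => y23 | 3, 2 => - y23
  | _, _ => 0
  end.

Section TwoForms.
Variable K : rcfType.
Local Notation C := (K[i]).
Local Notation sgn := (@sgn K).

Definition antisym (F : tensor2 K) := forall a b, F a b = - F b a.
Definition symm (F : tensor2 K) := forall a b, F a b = F b a.

Lemma tensor2P (A B : tensor2 K) : (forall a b, A a b = B a b) -> A = B.
Proof. by move=> AB; do 2 apply: functional_extensionality => ?; apply: AB. Qed.

Lemma antisym_diag (F : tensor2 K) a : antisym F -> F a a = 0.
Proof.
move=> Fa; have /eqP := Fa a a.
by rewrite -subr_eq0 opprK -mulr2n mulrn_eq0 => /eqP.
Qed.

Lemma form2E (F : tensor2 K) : antisym F ->
  F = form2 (F i0 i1) (F i0 i2) (F i0 i3) (F i1 i2) (F i1 i3) (F i2 i3).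
Proof.
move=> Fa; apply: tensor2P => a b.
by idxcase a; idxcase b; rewrite /form2 /= ?antisym_diag // Fa.
Qed.

Lemma form2_antisym (y01 y02 y03 y12 y13 y23 : C) :
  antisym (form2 y01 y02 y03 y12 y13 y23 : tensor2 K).
Proof. by move=> a b; idxcase a; idxcase b; rewrite /form2 /= ?opprK ?oppr0. Qed.

Lemma hdual2E (F : tensor2 K) a b :
  hdual2 F a b = 2%:R^-1 * \sum_c \sum_d vol K a b c d * sgn c * sgn d * F c d.
Proof.
congr (_ * _); apply: eq_bigr => c _; apply: eq_bigr => d _.
rewrite (sum_idx1 (m := c)) => [|c' c'c]; last first.
  by apply: big1 => d' _; rewrite (gmE _ c) eq_sym (negPf c'c); ring.
rewrite (sum_idx1 (m := d)) => [|d' d'd]; first by rewrite !gmE !eqxx.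
by rewrite (gmE _ d) eq_sym (negPf d'd); ring.
Qed.

Lemma hdual2_form2 (F : tensor2 K) : antisym F ->
  hdual2 F = form2 (F i2 i3) (- F i1 i3) (F i1 i2) (- F i0 i3) (F i0 i2) (- F i0 i1).
Proof.
move=> Fa; rewrite {1}(form2E Fa); apply: tensor2P => a b.
rewrite hdual2E !sum_idx.
by idxcase a; idxcase b; rewrite /form2 /sgn /Defs.gm /vol /zi /=; field.
Qed.

Lemma hdual2_lin (al be : C) (A B : tensor2 K) :
  hdual2 (fun a b => al * A a b + be * B a b) =
  fun a b => al * hdual2 A a b + be * hdual2 B a b.
Proof. by apply: tensor2P => a b; rewrite !hdual2E !sum_idx; ring. Qed.

Lemma hdual2_antisym (F : tensor2 K) : antisym F -> antisym (hdual2 F).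
Proof. by move=> Fa; rewrite hdual2_form2 //; exact: form2_antisym. Qed.

Lemma hdual2K (F : tensor2 K) : antisym F -> hdual2 (hdual2 F) = fun a b => - F a b.
Proof.
move=> Fa; rewrite (hdual2_form2 (hdual2_antisym Fa)) (hdual2_form2 Fa).
apply: tensor2P => a b; rewrite [in RHS](form2E Fa).
by idxcase a; idxcase b; rewrite /form2 /= ?opprK ?oppr0.
Qed.

End TwoForms.

Section Matrices.
Variable K : rcfType.
Local Notation C := (K[i]).
Local Notation sgn := (@sgn K).

(* The mixed components A^a_b. *)
Definition mx (A : tensor2 K) : 'M[C]_4 := \matrix_(i, j) (sgn i * A i j).

Lemma mx_inj (A B : tensor2 K) : mx A = mx B -> A = B.
Proof.
move=> /matrixP AB; apply: tensor2P => a b; have := AB a b; rewrite !mxE.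
exact/mulfI/sgn_neq0.
Qed.

Lemma dot2E (A B : tensor2 K) a b : dot2 A B a b = \sum_m A a m * sgn m * B m b.
Proof.
apply: eq_bigr => m _; under eq_bigr do rewrite -mulrA.
by rewrite -mulr_sumr sum_gm mulrA.
Qed.

Lemma dot2_antisym_symm (X S : tensor2 K) a b : antisym X -> symm S ->
  dot2 X S a b = - dot2 S X b a.
Proof.
move=> Xa Ss; rewrite !dot2E -sumrN; apply: eq_bigr => m _.
by rewrite (Xa a m) (Ss m b); ring.
Qed.

Lemma dot2_antisym_symm_sq (A : tensor2 K) : antisym A -> symm (dot2 A A).
Proof.
by move=> Aa a b; rewrite !dot2E; apply: eq_bigr => m _; rewrite (Aa a m) (Aa m b); ring.
Qed.

Lemma mx_dot2 (A B : tensor2 K) : mx (dot2 A B) = mx A *m mx B.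
Proof.
apply/matrixP => i j; rewrite !mxE dot2E mulr_sumr; apply: eq_bigr => m _.
by rewrite !mxE; ring.
Qed.

Lemma mx_lin (al be : C) (A B : tensor2 K) :
  mx (fun a b => al * A a b + be * B a b) = al *: mx A + be *: mx B.
Proof. by apply/matrixP => i j; rewrite !mxE; ring. Qed.

Lemma mx_add (A B : tensor2 K) : mx (fun a b => A a b + B a b) = mx A + mx B.
Proof. by apply/matrixP => i j; rewrite !mxE mulrDr. Qed.

Lemma mx_scale2 (k : C) (A : tensor2 K) : mx (scale2 k A) = k *: mx A.
Proof. by apply/matrixP => i j; rewrite !mxE mulrCA. Qed.

Lemma mx0 : mx (fun _ _ => 0) = 0.
Proof. by apply/matrixP => i j; rewrite !mxE mulr0. Qed.

Lemma mx_opp (A : tensor2 K) : mx (fun a b => - A a b) = - mx A.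
Proof. by apply/matrixP => i j; rewrite !mxE mulrN. Qed.

Lemma tr2_mx (A : tensor2 K) : tr2 A = \tr (mx A).
Proof. by apply: eq_bigr => a _; rewrite sum_gm mxE. Qed.

Lemma mxtrace_mx_antisym (X Y : tensor2 K) : antisym Y ->
  \tr (mx X *m mx Y) = - \sum_a \sum_b sgn a * sgn b * (X a b * Y a b).
Proof.
move=> Ya; rewrite /mxtrace -sumrN; apply: eq_bigr => a _; rewrite !mxE -sumrN.
by apply: eq_bigr => b _; rewrite !mxE (Ya b a); ring.
Qed.

Lemma sum_gm2 (F G : tensor2 K) :
  \sum_a \sum_b \sum_a' \sum_b' F a b * gm K a a' * gm K b b' * G a' b'
  = \sum_a \sum_b sgn a * sgn b * (F a b * G a b).
Proof.
apply: eq_bigr => a _; apply: eq_bigr => b _.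
rewrite (sum_idx1 (m := a)) => [|a' a'a]; last first.
  by apply: big1 => b' _; rewrite (gmE _ a) eq_sym (negPf a'a); ring.
rewrite (sum_idx1 (m := b)) => [|b' b'b]; first by rewrite !gmE !eqxx; ring.
by rewrite (gmE _ b) eq_sym (negPf b'b); ring.
Qed.

Lemma mx_dual_product (F G : tensor2 K) : antisym F -> antisym G ->
  mx F *m mx G - mx (hdual2 G) *m mx (hdual2 F) = (2%:R^-1 * \tr (mx F *m mx G))%:M.
Proof.
move=> Fa Ga; rewrite (hdual2_form2 Fa) (hdual2_form2 Ga) (form2E Fa) (form2E Ga).
apply/matrixP => i j; rewrite /mxtrace !(sum_idx, mxE).
by idxcase i; idxcase j; rewrite /form2 /sgn /Defs.gm /=; field.
Qed.

Lemma mxtrace_mx_hdual2 (F : tensor2 K) : antisym F ->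
  \tr (mx F *m mx (hdual2 F)) =
  4%:R * (F i0 i1 * F i2 i3 - F i0 i2 * F i1 i3 + F i0 i3 * F i1 i2).
Proof.
move=> Fa; rewrite (hdual2_form2 Fa) {1}(form2E Fa) /mxtrace !(sum_idx, mxE).
by rewrite /form2 /sgn /Defs.gm /=; ring.
Qed.

End Matrices.

Lemma lmod_mulr2n_eq0 (K : rcfType) (V : lmodType K[i]) (x : V) : x *+ 2 = 0 -> x = 0.
Proof.
rewrite -scaler_nat => /eqP; rewrite scaler_eq0 pnatr_eq0 /=.
by move/eqP.
Qed.

(** * Simple 2-forms *)

Section SimpleForm.
Variable K : rcfType.
Variable F : tensor2 K.
Hypothesis Fa : antisym F.
Hypothesis F_simple : \tr (mx F *m mx (hdual2 F)) = 0.
Local Notation M := (mx F).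
Local Notation M' := (mx (hdual2 F)).

Lemma mx_mul_hdual2 : M *m M' = 0.
Proof.
have := mx_dual_product Fa (hdual2_antisym Fa).
rewrite hdual2K // mx_opp mulNmx opprK F_simple mulr0 raddf0 -mulr2n.
exact: lmod_mulr2n_eq0.
Qed.

Lemma mx_hdual2_mul : M' *m M = 0.
Proof.
have := mx_dual_product (hdual2_antisym Fa) Fa.
rewrite hdual2K // mx_opp mulmxN opprK mxtrace_mulC F_simple mulr0 raddf0 -mulr2n.
exact: lmod_mulr2n_eq0.
Qed.

Lemma mx_sandwich (X : tensor2 K) : antisym X ->
  M *m mx X *m M = (2%:R^-1 * \tr (mx X *m M)) *: M.
Proof.
move=> Xa; have /(congr1 (mulmx^~ M)) := mx_dual_product Fa Xa.
rewrite /= mulmxBl -[mx (hdual2 X) *m _ *m _]mulmxA mx_hdual2_mul mulmx0 subr0.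
by rewrite mul_scalar_mx mxtrace_mulC.
Qed.

Lemma mx_cube : M *m M *m M = (2%:R^-1 * \tr (M *m M)) *: M.
Proof. exact: mx_sandwich. Qed.

Lemma mx_comm_symm (R : tensor2 K) : symm R -> mx R *m M = M *m mx R ->
  (2%:R^-1 * \tr (M *m M)) *: (mx R *m M) = (2%:R^-1 * \tr (mx R *m (M *m M))) *: M.
Proof.
move=> Rs RM; have RFa : antisym (dot2 R F).
  have /mx_inj RF : mx (dot2 R F) = mx (dot2 F R) by rewrite !mx_dot2.
  by move=> a b; rewrite {1}RF dot2_antisym_symm.
have := mx_sandwich RFa; rewrite mx_dot2 mulmxA -RM -!mulmxA [M *m (M *m M)]mulmxA.
by rewrite mx_cube -scalemxAr => ->.
Qed.

Lemma hdual2_simple : \tr (M' *m mx (hdual2 (hdual2 F))) = 0.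
Proof. by rewrite hdual2K // mx_opp mulmxN raddfN /= mxtrace_mulC F_simple oppr0. Qed.

End SimpleForm.

Section Scalars.
Variable K : rcfType.
Local Notation C := (K[i]).

Lemma toCE (x : K) : toC x = x%:C. Proof. by []. Qed.

Definition isqrt2 : C := (toC (Num.sqrt (2%:R : K)))^-1.

Lemma isqrt2_sq : isqrt2 * isqrt2 = 2%:R^-1.
Proof.
rewrite /isqrt2 -invfM toCE -rmorphM -expr2.
by rewrite sqr_sqrtr ?ler0n // rmorph_nat.
Qed.

Lemma isqrt2_neq0 : isqrt2 != 0.
Proof.
apply/eqP => s0; have := isqrt2_sq; rewrite s0 mul0r => /eqP.
by rewrite eq_sym invr_eq0 pnatr_eq0.
Qed.

Lemma conjcM (x y : C) : conjc (x * y) = conjc x * conjc y.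
Proof. exact: rmorphM. Qed.

Lemma conjcB (x y : C) : conjc (x - y) = conjc x - conjc y.
Proof. exact: rmorphB. Qed.

Lemma ci_sq : ci K * ci K = -1.
Proof. by apply/eqP; rewrite eq_complex /=; apply/andP; split; apply/eqP; ring. Qed.

Lemma conjc_ci : conjc (ci K) = - ci K.
Proof. by apply/eqP; rewrite eq_complex /=; apply/andP; split; apply/eqP; ring. Qed.

Lemma conjc_isqrt2 : conjc isqrt2 = isqrt2.
Proof. by rewrite /isqrt2 conjc_inv conjc_real. Qed.

End Scalars.

Section UnitForm.
Variable K : rcfType.
Variable U : idx -> idx -> K.
Hypothesis HU : simple_unit_2form U.
Local Notation u := (realT2 U).
Local Notation w := (hdual2 (realT2 U)).
Local Notation Mu := (mx u).
Local Notation Mw := (mx w).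

Lemma unit_antisym : antisym u.
Proof. by case: HU => Ua _ a b; rewrite /realT2 Ua !toCE rmorphN. Qed.

Lemma unit_hdual2_antisym : antisym w.
Proof. exact: hdual2_antisym unit_antisym. Qed.

Lemma unit_simple : \tr (Mu *m Mw) = 0.
Proof.
case: HU => Ua [UP _]; rewrite mxtrace_mx_hdual2; last exact: unit_antisym.
have := UP i0 i1 i2 i3; rewrite (Ua i3 i1) => P.
rewrite /realT2 !toCE -!rmorphM -rmorphB -rmorphD.
by rewrite (_ : _ - _ + _ = 0) ?rmorph0 ?mulr0 //; lra.
Qed.

Lemma unit_trace_sq : \tr (Mu *m Mu) = 2%:R.
Proof.
case: HU => _ [_]; rewrite sum_gm2 mxtrace_mx_antisym; last exact: unit_antisym.
by move/(congr1 (fun x => - (2%:R * x))); rewrite mulrA mulfV ?pnatr_eq0 // mul1r => ->; ring.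
Qed.

Lemma unit_mul_hdual2 : Mu *m Mw = 0.
Proof. exact: mx_mul_hdual2 unit_antisym unit_simple. Qed.

Lemma hdual2_unit_mul : Mw *m Mu = 0.
Proof. exact: mx_hdual2_mul unit_antisym unit_simple. Qed.

Lemma unit_sq_sub : Mu *m Mu - Mw *m Mw = 1%:M.
Proof.
by rewrite (mx_dual_product unit_antisym unit_antisym) unit_trace_sq mulVf ?pnatr_eq0.
Qed.

Lemma unit_cube : Mu *m Mu *m Mu = Mu.
Proof.
by rewrite (mx_cube unit_antisym unit_simple) unit_trace_sq mulVf ?pnatr_eq0 // scale1r.
Qed.

Lemma hdual2_unit_sq : Mw *m Mw = Mu *m Mu - 1%:M.
Proof. by rewrite -unit_sq_sub opprB addrC subrK. Qed.

Lemma hdual2_unit_trace_sq : \tr (Mw *m Mw) = - 2%:R.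
Proof. by rewrite hdual2_unit_sq mxtraceD raddfN /= unit_trace_sq mxtrace1; ring. Qed.

Lemma hdual2_unit_cube : Mw *m Mw *m Mw = - Mw.
Proof.
rewrite (mx_cube unit_hdual2_antisym (hdual2_simple unit_antisym unit_simple)).
rewrite hdual2_unit_trace_sq mulrN.
by rewrite mulVf ?pnatr_eq0 // scaleN1r.
Qed.

Local Notation MPi := (Mu *m Mu + Mw *m Mw).

Lemma mx_Pi_vh : mx (Pi_vh U) = MPi.
Proof.
rewrite -!mx_dot2 -mx_add; congr mx; apply: tensor2P => a b.
by rewrite /Pi_vh /proj_h /proj_v; ring.
Qed.

Lemma Pi_unit : MPi *m Mu = Mu.
Proof. by rewrite mulmxDl unit_cube -mulmxA hdual2_unit_mul mulmx0 addr0. Qed.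

Lemma unit_Pi : Mu *m MPi = Mu.
Proof. by rewrite mulmxDr mulmxA unit_cube mulmxA unit_mul_hdual2 mul0mx addr0. Qed.

Lemma Pi_hdual2_unit : MPi *m Mw = - Mw.
Proof. by rewrite mulmxDl -mulmxA unit_mul_hdual2 mulmx0 add0r hdual2_unit_cube. Qed.

Lemma hdual2_unit_Pi : Mw *m MPi = - Mw.
Proof. by rewrite mulmxDr mulmxA hdual2_unit_mul mul0mx add0r mulmxA hdual2_unit_cube. Qed.

Lemma Pi_sq : MPi *m MPi = 1%:M.
Proof. by rewrite mulmxDr !mulmxA Pi_unit Pi_hdual2_unit mulNmx unit_sq_sub. Qed.

Lemma Pi_trace : \tr MPi = 0.
Proof. by rewrite mxtraceD unit_trace_sq hdual2_unit_trace_sq subrr. Qed.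

Lemma conjc_hdual2_unit a b : conjc (w a b) = w a b.
Proof.
by rewrite (hdual2_form2 unit_antisym); idxcase a; idxcase b;
  rewrite /form2 /realT2 /toC /=; apply/eqP; rewrite eq_complex /= ?oppr0 ?eqxx.
Qed.

Lemma mx_sdU : mx (sdU U) = isqrt2 K *: (Mu - ci K *: Mw).
Proof.
rewrite scalerBr scalerA -scaleNr -mx_lin; congr mx; apply: tensor2P => a b.
by rewrite /sdU -/(isqrt2 K); ring.
Qed.

Lemma sdU_comm_Pi : mx (sdU U) *m MPi = MPi *m mx (sdU U).
Proof.
rewrite mx_sdU -scalemxAl -scalemxAr mulmxBr mulmxBl -scalemxAr -scalemxAl.
by rewrite Pi_unit unit_Pi Pi_hdual2_unit hdual2_unit_Pi.
Qed.

Lemma mx_conj_sdU : mx (conj2 (sdU U)) = isqrt2 K *: (Mu + ci K *: Mw).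
Proof.
rewrite scalerDr scalerA -mx_lin; congr mx; apply: tensor2P => a b.
rewrite /conj2 /cconj /sdU -/(isqrt2 K) !conjcM conjcB conjcM conjc_isqrt2 conjc_ci.
by rewrite conjc_hdual2_unit /realT2 toCE conjc_real; ring.
Qed.

Lemma mx_PiU : mx (PiU U) = MPi.
Proof.
rewrite /PiU mx_scale2 mx_dot2 mx_sdU mx_conj_sdU.
rewrite -scalemxAl -scalemxAr !scalerA -mulrA isqrt2_sq mulfV ?pnatr_eq0 // scale1r.
rewrite mulmxDr !mulmxBl -!scalemxAl -!scalemxAr unit_mul_hdual2 hdual2_unit_mul !scaler0.
by rewrite subr0 add0r scalerA ci_sq scaleN1r opprK.
Qed.

Lemma PiU_Pi_vh : PiU U = Pi_vh U.
Proof. by apply: mx_inj; rewrite mx_PiU mx_Pi_vh. Qed.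

End UnitForm.

(** * Ricci tensors of Einstein-Maxwell type *)

Section RealMatrices.
Variable K : rcfType.
Local Notation C := (K[i]).

Lemma conjc_fixed (z : C) : conjc z = z -> z = toC (complex.Re z).
Proof. by case: z => a b [b0]; rewrite /toC (_ : b = 0) //; lra. Qed.

Lemma mxtrace_conjc (A : 'M[C]_4) : \tr (map_mx conjc A) = conjc (\tr A).
Proof. by rewrite /mxtrace rmorph_sum; apply: eq_bigr => i _; rewrite mxE. Qed.

Lemma map_mx_conjc_real (A : idx -> idx -> K) : map_mx conjc (mx (realT2 A)) = mx (realT2 A).
Proof.
apply/matrixP => i j; rewrite !mxE conjcM /realT2 toCE conjc_real; congr (_ * _).
by idxcase i; apply/eqP; rewrite eq_complex /= ?oppr0 !eqxx.
Qed.

Lemma real_sub_ci_eq0 (x y : C) :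
  conjc x = x -> conjc y = y -> x - ci K * y = 0 -> x = 0 /\ y = 0.
Proof.
move=> /conjc_fixed -> /conjc_fixed ->; set a := complex.Re x; set b := complex.Re y.
move/eqP; rewrite eq_complex /= => /andP[/eqP a0 /eqP b0].
by split; apply/eqP; rewrite eq_complex /= eqxx andbT; apply/eqP; lra.
Qed.

Lemma real_mx_sub_ci_eq0 (A B : 'M[C]_4) :
  map_mx conjc A = A -> map_mx conjc B = B -> A - ci K *: B = 0 -> A = 0 /\ B = 0.
Proof.
move=> /matrixP Ar /matrixP Br /matrixP AB.
have AB0 i j : A i j = 0 /\ B i j = 0.
  by move: (Ar i j) (Br i j) (AB i j); rewrite !mxE; exact: real_sub_ci_eq0.
by split; apply/matrixP => i j; rewrite mxE; case: (AB0 i j).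
Qed.

End RealMatrices.

Section EinsteinMaxwell.
Variable K : rcfType.
Variable U : idx -> idx -> K.
Hypothesis HU : simple_unit_2form U.
Variable Ric : idx -> idx -> K.
Hypothesis Ric_sym : forall a b, Ric a b = Ric b a.
Local Notation u := (realT2 U).
Local Notation w := (hdual2 (realT2 U)).
Local Notation Mu := (mx u).
Local Notation Mw := (mx w).
Local Notation MPi := (Mu *m Mu + Mw *m Mw).
Local Notation MR := (mx (realT2 Ric)).

Lemma map_mx_conjc_hdual2_unit : map_mx conjc Mw = Mw.
Proof.
apply/matrixP => i j; rewrite !mxE conjcM conjc_hdual2_unit //; congr (_ * _).
by idxcase i; apply/eqP; rewrite eq_complex /= ?oppr0 !eqxx.
Qed.

Lemma EM_type_mx (kappa : K) :
  realT2 Ric = scale2 (- toC kappa) (PiU U) <-> MR = (- toC kappa) *: MPi.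
Proof.
rewrite -(mx_PiU HU) -mx_scale2.
by split=> [-> // | /mx_inj].
Qed.

Lemma EM_type_conditions : EM_type Ric U ->
  [/\ realT2 Ric <> (fun _ _ => 0), tr2 (realT2 Ric) = 0 &
      dot2 (realT2 Ric) (sdU U) = dot2 (sdU U) (realT2 Ric)].
Proof.
move=> [k [k0 /EM_type_mx MRE]]; split.
- move=> R0; have := Pi_sq HU; move: MRE; rewrite R0 mx0 => /eqP.
  rewrite eq_sym scaler_eq0 oppr_eq0 toCE fmorph_eq0 (negPf k0) => /= /eqP ->.
  by rewrite mul0mx => /matrixP /(_ i0 i0); rewrite !mxE /= => /eqP; rewrite eq_sym oner_eq0.
- by rewrite tr2_mx MRE mxtraceZ (Pi_trace HU) mulr0.
- apply: mx_inj; rewrite !mx_dot2 MRE -scalemxAl -scalemxAr.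
  by rewrite (sdU_comm_Pi HU).
Qed.

Lemma Ric_symm : symm (realT2 Ric).
Proof. by move=> a b; rewrite /realT2 Ric_sym. Qed.

Lemma Ric_comm_unit_hdual2 : MR *m (Mu - ci K *: Mw) = (Mu - ci K *: Mw) *m MR ->
  MR *m Mu = Mu *m MR /\ MR *m Mw = Mw *m MR.
Proof.
move=> RS; have [] := @real_mx_sub_ci_eq0 _ (MR *m Mu - Mu *m MR) (MR *m Mw - Mw *m MR).
- by rewrite map_mxB !map_mxM !map_mx_conjc_real.
- by rewrite map_mxB !map_mxM map_mx_conjc_real map_mx_conjc_hdual2_unit.
- transitivity (MR *m (Mu - ci K *: Mw) - (Mu - ci K *: Mw) *m MR); last by rewrite RS subrr.
  rewrite mulmxBr mulmxBl -scalemxAr -scalemxAl scalerBr !opprD !opprK.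
  by rewrite addrACA.
by move=> /eqP; rewrite subr_eq0 => /eqP -> /eqP; rewrite subr_eq0 => /eqP ->.
Qed.

Lemma mx_Ric_Pi : tr2 (realT2 Ric) = 0 -> MR *m Mu = Mu *m MR -> MR *m Mw = Mw *m MR ->
  MR = (2%:R^-1 * \tr (MR *m (Mu *m Mu))) *: MPi.
Proof.
move=> trR RMu RMw; set t := _ * _.
have Ru : MR *m Mu = t *: Mu.
  have := mx_comm_symm (unit_antisym HU) (unit_simple HU) Ric_symm RMu.
  by rewrite (unit_trace_sq HU) mulVf ?pnatr_eq0 // scale1r.
have Rw : MR *m Mw = - t *: Mw.
  have := mx_comm_symm (unit_hdual2_antisym HU) (hdual2_simple (unit_antisym HU) (unit_simple HU))
    Ric_symm RMw.
  rewrite (hdual2_unit_trace_sq HU) (hdual2_unit_sq HU) mulmxBr mulmx1 mxtraceD raddfN /=.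
  rewrite -tr2_mx trR subr0 mulrN mulVf ?pnatr_eq0 // scaleN1r -/t => /eqP.
  by rewrite eqr_oppLR -scaleNr => /eqP.
rewrite -[MR]mulmx1 -(unit_sq_sub HU) mulmxBr !mulmxA Ru Rw -!scalemxAl scaleNr opprK.
by rewrite scalerDr.
Qed.

Lemma EM_type_of_conditions :
  [/\ realT2 Ric <> (fun _ _ => 0), tr2 (realT2 Ric) = 0 &
      dot2 (realT2 Ric) (sdU U) = dot2 (sdU U) (realT2 Ric)] -> EM_type Ric U.
Proof.
move=> [R0 trR RS].
have RSmx : MR *m (Mu - ci K *: Mw) = (Mu - ci K *: Mw) *m MR.
  apply: (scalerI (isqrt2_neq0 K)); rewrite scalemxAr scalemxAl -mx_sdU -!mx_dot2.
  by rewrite RS.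
have [RMu RMw] := Ric_comm_unit_hdual2 RSmx.
have := mx_Ric_Pi trR RMu RMw; set t := _ * _ => MRE.
have t_real : conjc t = t.
  rewrite /t conjcM conjc_inv conjc_nat -mxtrace_conjc !map_mxM.
  by rewrite !map_mx_conjc_real.
exists (- complex.Re t); split.
- rewrite oppr_eq0; apply/eqP => t0; apply: R0; apply: mx_inj.
  by rewrite mx0 MRE (conjc_fixed t_real) t0 toCE rmorph0 scale0r.
- apply/EM_type_mx; rewrite MRE {1}(conjc_fixed t_real); congr (_ *: _).
  by apply/eqP; rewrite eq_complex /= !opprK oppr0 !eqxx.
Qed.

End EinsteinMaxwell.

(** * Weyl tensors and self-dual double forms *)

Section RiemannSymmetries.
Variable K : rcfType.
Variable W : idx -> idx -> idx -> idx -> K.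
Hypothesis W_antisym : forall a b c d, W a b c d = - W b a c d.
Hypothesis W_pair : forall a b c d, W a b c d = W c d a b.

(* Every component of W equals +-1 or 0 times one of its 21 components with
   both index pairs sorted and the pairs in lexicographic order; rewriting with
   [W_normalE] turns componentwise identities into linear arithmetic. *)
Definition sort_pair (a b : idx) : K * idx * idx :=
  if (val a < val b)%N then (1, a, b) else if (val b < val a)%N then (-1, b, a) else (0, a, b).

Definition W_normal (a b c d : idx) : K :=
  let: (s, p, q) := sort_pair a b in let: (s', r, t) := sort_pair c d in
  if ((val p < val r) || ((val p == val r) && (val q <= val t)))%N
  then s * s' * W p q r t else s * s' * W r t p q.

Lemma W_sort_pair1 a b c d :
  W a b c d = (sort_pair a b).1.1 * W (sort_pair a b).1.2 (sort_pair a b).2 c d.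
Proof.
rewrite /sort_pair; case: ltngtP => ab /=; rewrite ?mul1r ?mulN1r -?W_antisym //.
rewrite (val_inj ab) mul0r; have := W_antisym b b c d; lra.
Qed.

Lemma W_sort_pair2 a b c d :
  W a b c d = (sort_pair c d).1.1 * W a b (sort_pair c d).1.2 (sort_pair c d).2.
Proof. by rewrite W_pair W_sort_pair1 W_pair. Qed.

Lemma W_normalE a b c d : W a b c d = W_normal a b c d.
Proof.
rewrite /W_normal W_sort_pair1; case: (sort_pair a b) => [[s p] q] /=.
rewrite W_sort_pair2; case: (sort_pair c d) => [[s' r] t] /=.
by case: ifP => _; rewrite mulrA // W_pair.
Qed.

Definition rdual (a b c d : idx) : K :=
  form2 (W i2 i3 c d) (- W i1 i3 c d) (W i1 i2 c d)
        (- W i0 i3 c d) (W i0 i2 c d) (- W i0 i1 c d) a b.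

Hypothesis W_cyclic : W i0 i1 i2 i3 + W i0 i2 i3 i1 + W i0 i3 i1 i2 = 0.
Hypothesis W_tracefree : forall a c, - W a i0 c i0 + W a i1 c i1 + W a i2 c i2 + W a i3 c i3 = 0.

(* Left and right duals of a Weyl tensor agree; this is where the cyclic identity
   and trace-freeness are used. *)
Lemma rdual_pair a b c d : rdual a b c d = rdual c d a b.
Proof.
have cyc := W_cyclic; have tf a' c' := W_tracefree a' c'.
have t00 := tf i0 i0; have t01 := tf i0 i1; have t02 := tf i0 i2; have t03 := tf i0 i3.
have t11 := tf i1 i1; have t12 := tf i1 i2; have t13 := tf i1 i3.
have t22 := tf i2 i2; have t23 := tf i2 i3; have t33 := tf i3 i3.
rewrite !W_normalE /W_normal /= in cyc t00 t01 t02 t03 t11 t12 t13 t22 t23 t33.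
by idxcase a; idxcase b; idxcase c; idxcase d; rewrite /rdual /form2 /= ?W_normalE /W_normal /=;
  first [ring | lra].
Qed.

End RiemannSymmetries.

Section DoubleForms.
Variable K : rcfType.
Local Notation C := (K[i]).
Local Notation sgn := (@sgn K).

Lemma tensor4P (P Q : tensor4 K) : (forall a b c d, P a b c d = Q a b c d) -> P = Q.
Proof. by move=> PQ; do 4 apply: functional_extensionality => ?; apply: PQ. Qed.

Lemma Tr4E (P : tensor4 K) :
  Tr4 P = 2%:R^-1 * \sum_a \sum_b sgn a * sgn b * P a b a b.
Proof.
congr (_ * _); apply: eq_bigr => a _; apply: eq_bigr => b _.
under eq_bigr do under eq_bigr do rewrite -mulrA.
under eq_bigr do rewrite -mulr_sumr.
by rewrite sum_gm sum_gm mulrA.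
Qed.

Lemma Tr4_lin (al be : C) (P Q : tensor4 K) :
  Tr4 (fun a b c d => al * P a b c d + be * Q a b c d) = al * Tr4 P + be * Tr4 Q.
Proof. by rewrite !Tr4E !sum_idx; ring. Qed.

Lemma Tr4_rank_one (lam : C) (S : tensor2 K) :
  Tr4 (fun a b c d => lam * S a b * S c d) =
  lam * (2%:R^-1 * \sum_a \sum_b sgn a * sgn b * (S a b * S a b)).
Proof.
rewrite Tr4E mulrCA; congr (_ * _); rewrite mulr_sumr; apply: eq_bigr => a _.
by rewrite mulr_sumr; apply: eq_bigr => b _; ring.
Qed.

Lemma antisym_lin (A B : tensor2 K) (k : C) : antisym A -> antisym B ->
  antisym (fun a b => A a b + k * B a b).
Proof. by move=> Aa Ba a b; rewrite (Aa a b) (Ba a b); ring. Qed.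

Definition self_dual (X : tensor2 K) := hdual2 X = scale2 (ci K) X.

Definition sd2 (Y : tensor2 K) : tensor2 K :=
  fun a b => 2%:R^-1 * (Y a b - ci K * hdual2 Y a b).

Lemma sd2_antisym (Y : tensor2 K) : antisym Y -> antisym (sd2 Y).
Proof. by move=> Ya a b; rewrite /sd2 (Ya a b) (hdual2_antisym Ya a b); ring. Qed.

Lemma sd2_self_dual (Y : tensor2 K) : antisym Y -> self_dual (sd2 Y).
Proof.
move=> Ya; have -> : sd2 Y = fun a b => 2%:R^-1 * Y a b + - (2%:R^-1 * ci K) * hdual2 Y a b.
  by apply: tensor2P => a b; rewrite /sd2; ring.
rewrite /self_dual hdual2_lin hdual2K //; apply: tensor2P => a b; rewrite /scale2 /=.
transitivity (2%:R^-1 * ci K * Y a b - 2%:R^-1 * (ci K * ci K) * hdual2 Y a b); last ring.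
by rewrite ci_sq; ring.
Qed.

Lemma self_dual_lin (A B : tensor2 K) (k : C) : self_dual A -> self_dual B ->
  self_dual (fun a b => A a b + k * B a b).
Proof.
move=> Asd Bsd; have -> : (fun a b => A a b + k * B a b) = fun a b => 1 * A a b + k * B a b.
  by apply: tensor2P => a b; rewrite mul1r.
rewrite /self_dual hdual2_lin Asd Bsd; apply: tensor2P => a b; rewrite /scale2 /=; ring.
Qed.

End DoubleForms.

Section Weyl.
Variable K : rcfType.
Variable W : idx -> idx -> idx -> idx -> K.
Hypothesis HW : weyl_tensor W.
Local Notation WC := (realT4 W).

Lemma weyl_antisym a b c d : W a b c d = - W b a c d.
Proof. by case: HW. Qed.

Lemma weyl_pair a b c d : W a b c d = W c d a b.
Proof. by case: HW => _ []. Qed.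

Lemma weyl_cyclic : W i0 i1 i2 i3 + W i0 i2 i3 i1 + W i0 i3 i1 i2 = 0.
Proof. by case: HW => _ [_ [cyc _]]; apply: cyc. Qed.

Lemma weyl_tracefree a c : - W a i0 c i0 + W a i1 c i1 + W a i2 c i2 + W a i3 c i3 = 0.
Proof.
case: HW => _ [_ [_ /(_ a c)]]; under eq_bigr do rewrite sum_gm.
rewrite sum_idx /sgn /Defs.gm /realT4 /= => /eqP; rewrite eq_complex /= => /andP[/eqP + _].
lra.
Qed.

Lemma weyl_slice_antisym c d : antisym (fun a b => WC a b c d).
Proof. by move=> a b; rewrite /realT4 weyl_antisym !toCE rmorphN. Qed.

Lemma hdual4_weyl : hdual4 WC = realT4 (rdual W).
Proof.
apply: tensor4P => a b c d.
change (hdual2 (fun x y => WC x y c d) a b = realT4 (rdual W) a b c d).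
rewrite hdual2_form2; last exact: weyl_slice_antisym.
by idxcase a; idxcase b; rewrite /form2 /realT4 /rdual /=;
  apply/eqP; rewrite eq_complex /= ?oppr0 !eqxx.
Qed.

Lemma sdW_pair a b c d : sdW WC a b c d = sdW WC c d a b.
Proof.
rewrite /sdW hdual4_weyl /realT4 weyl_pair (rdual_pair weyl_antisym weyl_pair) //.
  exact: weyl_cyclic.
exact: weyl_tracefree.
Qed.

Lemma Tr4_weyl : Tr4 WC = 0.
Proof.
have t0 := weyl_tracefree i0 i0; have t1 := weyl_tracefree i1 i1.
have t2 := weyl_tracefree i2 i2; have t3 := weyl_tracefree i3 i3.
rewrite Tr4E !sum_idx /sgn /Defs.gm /realT4 /=; apply/eqP.
rewrite mulf_eq0; apply/orP; right; rewrite eq_complex /=; apply/andP; split; apply/eqP; lra.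
Qed.

Lemma Tr4_hdual4_weyl : Tr4 (hdual4 WC) = 0.
Proof.
have cyc := weyl_cyclic; rewrite !(W_normalE weyl_antisym weyl_pair) /W_normal /= in cyc.
rewrite hdual4_weyl Tr4E !sum_idx /sgn /Defs.gm /realT4 /rdual /form2 /=.
rewrite !(W_normalE weyl_antisym weyl_pair) /W_normal /=; apply/eqP.
rewrite mulf_eq0; apply/orP; right; rewrite eq_complex /=; apply/andP; split; apply/eqP; lra.
Qed.

Lemma Tr4_sdW : Tr4 (sdW WC) = 0.
Proof.
have -> : sdW WC = fun a b c d => 2%:R^-1 * WC a b c d + - (2%:R^-1 * ci K) * hdual4 WC a b c d.
  by apply: tensor4P => a b c d; rewrite /sdW; ring.
by rewrite Tr4_lin Tr4_weyl Tr4_hdual4_weyl; ring.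
Qed.

Lemma sdW_slice_antisym c d : antisym (fun a b => sdW WC a b c d).
Proof. exact: sd2_antisym (weyl_slice_antisym c d). Qed.

Lemma sdW_slice_self_dual c d : self_dual (fun a b => sdW WC a b c d).
Proof. exact: sd2_self_dual (weyl_slice_antisym c d). Qed.

End Weyl.

Section SelfDualMetric.
Variable K : rcfType.

Lemma gm_sym a b : gm K a b = gm K b a.
Proof. by rewrite !gmE eq_sym; case: eqP => // ->. Qed.

Lemma Gt_slice_antisym c d : antisym (fun a b => Gt K a b c d).
Proof. by move=> a b; rewrite /Gt /wedge; ring. Qed.

Lemma hdual2_Gt c d : hdual2 (fun a b => Gt K a b c d) = fun a b => volT K a b c d.
Proof.
rewrite hdual2_form2; last exact: Gt_slice_antisym.
apply: tensor2P => a b; idxcase a; idxcase b; idxcase c; idxcase d;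
  by rewrite /form2 /Gt /wedge /volT /vol /zi /Defs.gm /=; field.
Qed.

Lemma sdG_slice c d : (fun a b => sdG K a b c d) = sd2 (fun a b => Gt K a b c d).
Proof. by apply: tensor2P => a b; rewrite /sd2 hdual2_Gt. Qed.

Lemma sdG_slice_antisym c d : antisym (fun a b => sdG K a b c d).
Proof. by rewrite sdG_slice; exact: sd2_antisym (Gt_slice_antisym c d). Qed.

Lemma sdG_slice_self_dual c d : self_dual (fun a b => sdG K a b c d).
Proof. by rewrite sdG_slice; exact: sd2_self_dual (Gt_slice_antisym c d). Qed.

Lemma vol_pair a b c d : vol K a b c d = vol K c d a b.
Proof. by rewrite /vol; congr (_%:~R / _); ring. Qed.

Lemma sdG_pair a b c d : sdG K a b c d = sdG K c d a b.
Proof.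
by rewrite /sdG /Gt /wedge /volT vol_pair (gm_sym c a) (gm_sym d b) (gm_sym c b) (gm_sym d a); ring.
Qed.

Lemma Tr4_sdG : Tr4 (sdG K) = 3%:R.
Proof. by rewrite Tr4E !sum_idx /sdG /Gt /wedge /volT /vol /zi /sgn /Defs.gm /=; field. Qed.

End SelfDualMetric.

(** * Petrov type D *)

Section Contractions.
Variable K : rcfType.
Local Notation sgn := (@sgn K).

Lemma symPiPE (Pi : tensor2 K) (P : tensor4 K) l n g d :
  symm Pi -> antisym (fun a b => P a b g d) ->
  symPiP Pi P l n g d =
  2%:R^-1 * (dot2 (fun a b => P a b g d) Pi l n - dot2 Pi (fun a b => P a b g d) l n).
Proof.
move=> Pis Xa; set X := fun a b => P a b g d.
have -> : dot2 X Pi l n - dot2 Pi X l n = dot2 X Pi n l + dot2 X Pi l n.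
  by rewrite (dot2_antisym_symm n l Xa Pis) addrC.
rewrite /symPiP !dot2E -big_split; congr (_ * _); apply: eq_bigr => m _ /=.
rewrite (sum_idx1 (m := m)) ?gmE ?eqxx; first by rewrite /X; ring.
by move=> m' /negPf m'm; rewrite gmE eq_sym m'm; ring.
Qed.

Lemma symPiP_eq0 (Pi : tensor2 K) (P : tensor4 K) :
  symm Pi -> (forall g d, antisym (fun a b => P a b g d)) ->
  (forall l n g d, symPiP Pi P l n g d = 0) <->
  (forall g d, mx (fun a b => P a b g d) *m mx Pi = mx Pi *m mx (fun a b => P a b g d)).
Proof.
move=> Pis Xa; split=> [HP g d | HC l n g d].
- set X := fun a b => P a b g d; rewrite -!mx_dot2; congr mx; apply: tensor2P => l n.
  apply/eqP; rewrite -subr_eq0; have := HP l n g d; rewrite symPiPE // -/X => /eqP.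
  by rewrite mulf_eq0 invr_eq0 pnatr_eq0.
- set X := fun a b => P a b g d; have := HC g d; rewrite -/X -!mx_dot2 => /mx_inj XPi.
  by rewrite symPiPE // -/X XPi subrr mulr0.
Qed.

Lemma pair_symmetric_rank_one (P : tensor4 K) (S k : tensor2 K) :
  (forall a b c d, P a b c d = P c d a b) -> (forall a b c d, P a b c d = k c d * S a b) ->
  \sum_a \sum_b sgn a * sgn b * (S a b * S a b) != 0 ->
  exists lam, forall a b c d, P a b c d = lam * S a b * S c d.
Proof.
move=> Pp Pk; set q := \sum_a \sum_b _ => q0.
set mu := \sum_a \sum_b sgn a * sgn b * (S a b * k a b).
have kE c d : k c d = mu / q * S c d.
  apply: (mulIf q0); transitivity (\sum_a \sum_b sgn a * sgn b * (S a b * P a b c d)).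
    rewrite /q mulr_sumr; apply: eq_bigr => a _; rewrite mulr_sumr; apply: eq_bigr => b _.
    by rewrite Pk; ring.
  rewrite mulrAC divfK // /mu mulr_suml; apply: eq_bigr => a _; rewrite mulr_suml.
  by apply: eq_bigr => b _; rewrite Pp Pk; ring.
by exists (mu / q) => a b c d; rewrite Pk kE; ring.
Qed.

End Contractions.

Section PrincipalBivector.
Variable K : rcfType.
Variable U : idx -> idx -> K.
Hypothesis HU : simple_unit_2form U.
Local Notation u := (realT2 U).
Local Notation w := (hdual2 (realT2 U)).
Local Notation Mu := (mx u).
Local Notation Mw := (mx w).
Local Notation MPi := (Mu *m Mu + Mw *m Mw).

(* Self-duality turns the basic identity for (u, X) into u X = al + i X w; with
   X commuting with u^2 this yields Pi X = al (u + i w), and Pi^2 = 1. *)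
Lemma mx_self_dual_comm_Pi (X : tensor2 K) : antisym X -> self_dual X ->
  mx X *m MPi = MPi *m mx X -> mx X = (2%:R^-1 * \tr (mx X *m Mu)) *: (Mu - ci K *: Mw).
Proof.
move=> Xa Xsd XPi; set MX := mx X; set al := _ * _.
have uX : Mu *m MX = al%:M + ci K *: (MX *m Mw).
  have := mx_dual_product (unit_antisym HU) Xa; rewrite Xsd mx_scale2 mxtrace_mulC -/al.
  by move=> /eqP; rewrite subr_eq => /eqP ->; rewrite -scalemxAl.
have uuX : Mu *m Mu *m MX = al *: (Mu + ci K *: Mw) - MX *m (Mw *m Mw).
  rewrite -mulmxA uX mulmxDr mul_mx_scalar -scalemxAr [Mu *m (MX *m Mw)]mulmxA uX.
  rewrite mulmxDl mul_scalar_mx -scalemxAl -mulmxA !scalerDr !scalerA ci_sq scaleN1r.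
  by rewrite addrA (mulrC (ci K)).
have Mu2X : MX *m (Mu *m Mu) = Mu *m Mu *m MX.
  have Pi2 : MPi = Mu *m Mu + Mu *m Mu - 1%:M by rewrite (hdual2_unit_sq HU) addrA.
  move: XPi; rewrite Pi2 mulmxBr mulmxBl mulmx1 mul1mx mulmxDr mulmxDl => /addIr XX.
  apply/eqP; rewrite -subr_eq0; apply/eqP/lmod_mulr2n_eq0.
  by rewrite mulrnBl mulr2n XX -mulr2n subrr.
have Mw2X : Mw *m Mw *m MX = MX *m (Mw *m Mw).
  by rewrite (hdual2_unit_sq HU) mulmxBl mulmxBr mul1mx mulmx1 Mu2X.
have PiX : MPi *m MX = al *: (Mu + ci K *: Mw) by rewrite mulmxDl Mw2X uuX subrK.
rewrite -[MX]mul1mx -(Pi_sq HU) -mulmxA PiX -scalemxAr mulmxDr -scalemxAr.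
by rewrite (Pi_unit HU) (Pi_hdual2_unit HU) scalerN.
Qed.

Lemma Pi_vh_symm : symm (Pi_vh U).
Proof.
move=> a b; rewrite /Pi_vh /proj_v /proj_h !opprK.
by rewrite (dot2_antisym_symm_sq (unit_antisym HU)) (dot2_antisym_symm_sq (unit_hdual2_antisym HU)).
Qed.

Lemma sdU_antisym : antisym (sdU U).
Proof.
by move=> a b; rewrite /sdU (unit_antisym HU a b) (unit_hdual2_antisym HU a b); ring.
Qed.

Lemma sdU_sq : mx (sdU U) *m mx (sdU U) = (2%:R^-1)%:M.
Proof.
rewrite mx_sdU -scalemxAl -scalemxAr scalerA isqrt2_sq mulmxBr !mulmxBl -!scalemxAl.
rewrite -!scalemxAr (unit_mul_hdual2 HU) (hdual2_unit_mul HU) !scaler0 subr0 sub0r.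
by rewrite scalerA ci_sq scaleN1r opprK (unit_sq_sub HU) scalemx1.
Qed.

Lemma sdU_norm : \sum_a \sum_b sgn K a * sgn K b * (sdU U a b * sdU U a b) = - 2%:R.
Proof.
apply/eqP; rewrite -eqr_oppLR -mxtrace_mx_antisym; last exact: sdU_antisym.
by rewrite sdU_sq mxtrace_scalar; apply/eqP; rewrite -mulr_natr; field.
Qed.

Lemma self_dual_comm_Pi (X : tensor2 K) : antisym X -> self_dual X ->
  mx X *m MPi = MPi *m mx X ->
  X = scale2 (2%:R^-1 * \tr (mx X *m Mu) / isqrt2 K) (sdU U).
Proof.
move=> Xa Xsd XPi; apply: mx_inj; rewrite mx_scale2 mx_sdU scalerA divfK ?isqrt2_neq0 //.
exact: mx_self_dual_comm_Pi.
Qed.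

End PrincipalBivector.

Section PetrovD.
Variable K : rcfType.
Local Notation C := (K[i]).
Variable W : idx -> idx -> idx -> idx -> K.
Hypothesis HW : weyl_tensor W.
Local Notation P := (Ptens W).
Local Notation rho := (- b_inv W / a_inv W).

Lemma Ptens_slice_antisym c d : antisym (fun a b => P a b c d).
Proof. exact: antisym_lin (sdW_slice_antisym HW c d) (sdG_slice_antisym K c d). Qed.

Lemma Ptens_slice_self_dual c d : self_dual (fun a b => P a b c d).
Proof. exact: self_dual_lin (sdW_slice_self_dual HW c d) (sdG_slice_self_dual K c d). Qed.

Lemma Ptens_pair a b c d : P a b c d = P c d a b.
Proof. by rewrite /Ptens (sdW_pair HW) sdG_pair. Qed.

Lemma Tr4_Ptens : Tr4 P = b_inv W / a_inv W * 3%:R.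
Proof.
have -> : P = fun a b c d => 1 * sdW (realT4 W) a b c d + b_inv W / a_inv W * sdG K a b c d.
  by apply: tensor4P => a b c d; rewrite /Ptens mul1r.
by rewrite Tr4_lin (Tr4_sdW HW) Tr4_sdG; ring.
Qed.

Lemma a_inv_eq0 : sdW (realT4 W) = (fun _ _ _ _ => 0) -> a_inv W = 0.
Proof.
rewrite /a_inv => ->; rewrite Tr4E big1 ?mulr0 // => a _; apply: big1 => b _.
rewrite /comp4 big1 ?mulr0 // => m _; apply: big1 => n _.
by apply: big1 => m' _; apply: big1 => n' _; rewrite mulr0.
Qed.

Lemma typeD_principal_conditions (U : idx -> idx -> K) : simple_unit_2form U ->
  typeD_principal W (Pi_vh U) ->
  a_inv W != 0 /\ forall l n g d, symPiP (Pi_vh U) P l n g d = 0.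
Proof.
move=> HU [U' [HU' [PiE [rho0 sdWE]]]]; split.
  by apply: contraNneq rho0 => ->; rewrite invr0 mulr0. (* -b / 0 = 0 *)
have Pslice g d : (fun a b => P a b g d) = scale2 (3%:R * rho * sdU U' g d) (sdU U').
  by apply: tensor2P => a b; rewrite /Ptens sdWE /tens22 /scale2; ring.
rewrite -PiE (PiU_Pi_vh HU'); apply/(symPiP_eq0 (Pi_vh_symm HU') Ptens_slice_antisym) => g d.
by rewrite Pslice mx_scale2 -scalemxAl -scalemxAr (mx_Pi_vh U') (sdU_comm_Pi HU').
Qed.

Lemma typeD_principal_of_conditions (U : idx -> idx -> K) : simple_unit_2form U ->
  a_inv W != 0 -> (forall l n g d, symPiP (Pi_vh U) P l n g d = 0) ->
  typeD_principal W (Pi_vh U).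
Proof.
move=> HU a0 /(symPiP_eq0 (Pi_vh_symm HU) Ptens_slice_antisym); rewrite (mx_Pi_vh U) => PPi.
have Pk a b c d : P a b c d =
    (2%:R^-1 * \tr (mx (fun x y => P x y c d) *m mx (realT2 U)) / isqrt2 K) * sdU U a b.
  by rewrite -[LHS]/((fun x y => P x y c d) a b) {1}(self_dual_comm_Pi HU
    (Ptens_slice_antisym c d) (Ptens_slice_self_dual c d) (PPi c d)).
have [lam Plam] : exists lam, forall a b c d, P a b c d = lam * sdU U a b * sdU U c d.
  by apply: (pair_symmetric_rank_one Ptens_pair Pk); rewrite (sdU_norm HU) oppr_eq0 pnatr_eq0.
have lamE : lam = 3%:R * rho.
  have := Tr4_Ptens; rewrite (_ : P = fun a b c d => lam * sdU U a b * sdU U c d); last first.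
    by apply: tensor4P.
  rewrite Tr4_rank_one (sdU_norm HU) (_ : 2%:R^-1 * - 2%:R = -1 :> C); last by field.
  by rewrite mulrN1 => /eqP; rewrite eqr_oppLR => /eqP ->; ring.
have sdWE : sdW (realT4 W) =
    fun a b c d => 3%:R * rho * tens22 (sdU U) (sdU U) a b c d + rho * sdG K a b c d.
  apply: tensor4P => a b c d; have := Plam a b c d; rewrite /Ptens /tens22 lamE => PE.
  by rewrite (_ : sdW _ a b c d = 3%:R * rho * sdU U a b * sdU U c d + rho * sdG K a b c d);
    [ring | rewrite -PE; ring].
exists U; split=> //; split; first exact: PiU_Pi_vh HU.
split=> //; apply: contraNneq a0 => rho0; apply/eqP/a_inv_eq0.
by rewrite sdWE rho0; apply: tensor4P => a b c d; ring.
Qed.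

End PetrovD.

Close Scope complex_scope.

Theorem lemma3 (K : rcfType)
    (Ric : idx -> idx -> K) (W : idx -> idx -> idx -> idx -> K)
    (HRsym : forall a b, Ric a b = Ric b a)
    (HW : weyl_tensor W) :
  (forall U : idx -> idx -> K, simple_unit_2form U ->
     (EM_type Ric U <->
        [/\ realT2 Ric <> (fun _ _ => 0), tr2 (realT2 Ric) = 0 &
            dot2 (realT2 Ric) (sdU U) = dot2 (sdU U) (realT2 Ric)])) /\
  (forall U : idx -> idx -> K, simple_unit_2form U ->
     (typeD_principal W (Pi_vh U) <->
        (a_inv W != 0 /\
         forall l n g d : idx, symPiP (Pi_vh U) (Ptens W) l n g d = 0))).
Proof.
split=> U HU; split.
- exact: EM_type_conditions.
- exact: (EM_type_of_conditions HU HRsym).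
- exact: typeD_principal_conditions.
- by case; exact: typeD_principal_of_conditions.
Qed.
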